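(* Let $\mathbf d$ be a graphical degree sequence and let $k$ be an integer with $\underline{\mu}(\mathbf d)\le k\le\overline{\mu}(\mathbf d)$. Then there is a graph $G$ realizing $\mathbf d$ with $\mu(G)=k$.
   Context: All graphs are finite and simple. For a graph $G=(V,E)$ on $n$ vertices, a fractional vertex cover is a function $f:V\to[0,\infty)$ with $f(u)+f(v)\ge 1$ for every edge $uv\in E$; $\tau^*(G)$ denotes the minimum of $\sum_{v\in V}f(v)$ over all fractional vertex covers. For $E'\subseteq E$ let $G-E'=(V,E\setminus E')$. Define $\mu(G)=\min\{|E'| : E'\subseteq E,\ \tau^*(G-E')<n/2\}$. A sequence $(d_1,\dots,d_n)$ is graphical if some simple graph on $\{v_1,\dots,v_n\}$ has $d(v_i)=d_i$ for all $i$ (such a graph realizes it). $\underline{\mu}(\mathbf d)$ and $\overline{\mu}(\mathbf d)$ are the minimum and maximum of $\mu(G)$ over all graphs $G$ realizing $\mathbf d$. *)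

From HB Require Import structures.
From mathcomp Require Import all_boot all_order all_algebra.
From mathcomp Require Import boolp classical_sets reals.
Set Implicit Arguments. Unset Strict Implicit. Unset Printing Implicit Defensive.
Import Order.TTheory GRing.Theory Num.Theory.

Definition simple_graph (n : nat) (E : {set {set 'I_n}}) : bool :=
  [forall e in E, #|e| == 2].

Definition deg (n : nat) (E : {set {set 'I_n}}) (v : 'I_n) : nat :=
  #|[set e in E | v \in e]|.

Definition realizes (n : nat) (d : 'I_n -> nat) (E : {set {set 'I_n}}) : bool :=
  simple_graph E && [forall v, deg E v == d v].

Definition graphical (n : nat) (d : 'I_n -> nat) : Prop :=
  exists E : {set {set 'I_n}}, realizes d E.

Local Open Scope ring_scope.
Local Open Scope classical_set_scope.

Definition frac_cover (R : realType) (n : nat) (E : {set {set 'I_n}})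
  (f : 'I_n -> R) : Prop :=
  (forall v, 0 <= f v) /\
  (forall u v : 'I_n, u != v -> (u |: [set v])%SET \in E -> 1 <= f u + f v).

(* tau^*(G): the minimum (= infimum, which is attained) of the total weight
   of fractional vertex covers *)
Definition tau_star (R : realType) (n : nat) (E : {set {set 'I_n}}) : R :=
  inf [set x : R | exists f : 'I_n -> R, frac_cover E f /\ x = \sum_(i < n) f i].

(* mu(G) = min { |E'| : E' subset of E, tau^*(G - E') < n/2 }.
   The default value #|E| of the min is harmless whenever the range is
   nonempty (always the case for n >= 1). *)
Definition mu (R : realType) (n : nat) (E : {set {set 'I_n}}) : nat :=
  \big[minn/#|E|]_(E' : {set {set 'I_n}} |
      (E' \subset E) && (tau_star R (E :\: E') < n%:R / 2)) #|E'|.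

Definition mu_up (R : realType) (n : nat) (d : 'I_n -> nat) : nat :=
  \max_(E : {set {set 'I_n}} | realizes d E) mu R E.

(* underline mu(d): minimum of mu(G) over realizations of d.  The default
   value mu_up d of the min is harmless (it is attained when d is graphical). *)
Definition mu_low (R : realType) (n : nat) (d : 'I_n -> nat) : nat :=
  \big[minn/mu_up R d]_(E : {set {set 'I_n}} | realizes d E) mu R E.

(* Realizations of a degree sequence are connected by 2-switches, which replace
   two edges xy, zw by two non-edges xz, yw: if E <> H realize the same degrees,
   a 2-switch applied to E or to H strictly decreases the symmetric difference
   of E and H.  A 2-switch changes mu by at most one, because an optimal set of
   deleted edges for one graph adapts to the other at the cost of one more edge.
   A walk by 2-switches from a realization minimizing mu to one maximizing mu
   therefore takes every intermediate value. *)

From mathcomp Require Import all_boot all_order all_algebra.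
From mathcomp Require Import boolp classical_sets reals.
From mathcomp Require Import lra zify.
From mathcomp Require Import fintype finset.
Set Implicit Arguments. Unset Strict Implicit. Unset Printing Implicit Defensive.
Import Order.TTheory GRing.Theory Num.Theory.

Section SymmetricDifference.
Variable T : finType.
Implicit Types A B C : {set T}.

Definition symdiff A B : {set T} := (A :\: B) :|: (B :\: A).

Lemma in_symdiff x A B : (x \in symdiff A B) = ((x \in A) != (x \in B)).
Proof. by rewrite !inE; case: (x \in A); case: (x \in B). Qed.

Lemma symdiffC A B : symdiff A B = symdiff B A.
Proof. by rewrite /symdiff setUC. Qed.

Lemma symdiffA A B C : symdiff A (symdiff B C) = symdiff (symdiff A B) C.
Proof.
apply/setP => x; rewrite !in_symdiff.
by case: (x \in A); case: (x \in B); case: (x \in C).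
Qed.

Lemma symdiffK A B : symdiff (symdiff A B) B = A.
Proof. by apply/setP => x; rewrite !in_symdiff; case: (x \in A); case: (x \in B). Qed.

Lemma card_symdiff_lt A B : #|A :\: B| < #|A :&: B| -> #|symdiff A B| < #|B|.
Proof.
have disj : (A :\: B) :&: (B :\: A) = set0.
  by apply/setP => x; rewrite !inE; case: (x \in A); case: (x \in B).
have := cardsUI (A :\: B) (B :\: A); rewrite disj cards0 -/(symdiff A B).
have := cardsID A B; rewrite setIC; lia.
Qed.

Lemma card_symdiff_symdiff_lt A B C :
  #|B :\: symdiff A C| < #|B :&: symdiff A C| ->
  #|symdiff (symdiff A B) C| < #|symdiff A C|.
Proof. by rewrite (symdiffC A B) -symdiffA; exact: card_symdiff_lt. Qed.

Lemma symdiff_setU A B C : B \subset A -> [disjoint C & A] ->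
  symdiff A (B :|: C) = (A :\: B) :|: C.
Proof.
move=> /subsetP sBA dCA; apply/setP => x; rewrite in_symdiff !inE.
case xC: (x \in C); first by rewrite (disjointFr dCA xC) !orbT.
by case xB: (x \in B); rewrite ?(sBA x xB) //; case: (x \in A).
Qed.

Lemma big_symdiff_setU (F : T -> nat) A B C : B \subset A -> [disjoint C & A] ->
  \sum_(x in symdiff A (B :|: C)) F x + \sum_(x in B) F x =
  \sum_(x in A) F x + \sum_(x in C) F x.
Proof.
move=> sBA dCA; rewrite symdiff_setU // [\sum_(x in A) _](big_setID B) (setIidPr sBA).
have dDC : [disjoint A :\: B & C].
  by apply: disjointWl (subsetDl A B) _; rewrite disjoint_sym.
rewrite (eq_bigl [predU A :\: B & C]) => [|x]; last by rewrite !inE.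
by rewrite bigU //= addnAC (addnC (\sum_(i in B) F i)).
Qed.

End SymmetricDifference.

Section DiscreteIntermediateValue.
Variables (T : eqType) (P : T -> Prop) (step : T -> T -> Prop).
Variables (dist : T -> T -> nat) (f : T -> nat).
Hypothesis step_sym : forall a b, step a b -> step b a.
Hypothesis P_step : forall a b, P a -> step a b -> P b.
Hypothesis f_step : forall a b, step a b -> f b <= (f a).+1.
Hypothesis step_closer : forall a b, P a -> P b -> a != b ->
  (exists2 a', step a a' & dist a' b < dist a b) \/
  (exists2 b', step b b' & dist a b' < dist a b).

Lemma discrete_ivt a b k : P a -> P b -> f a <= k <= f b ->
  exists2 c, P c & f c = k.
Proof.
have [m] := ubnP (dist a b); elim: m a b => // m IH a b.
rewrite ltnS => le_dist Pa Pb /andP[le_ak le_kb].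
have [eq_ab|ab] := eqVneq a b.
  by rewrite -eq_ab in le_kb; exists a => //; apply/eqP; rewrite eqn_leq le_ak.
have [<-|ka] := eqVneq (f a) k; first by exists a.
have [<-|kb] := eqVneq (f b) k; first by exists b.
have [[a' aa' closer]|[b' bb' closer]] := step_closer Pa Pb ab.
- apply: (IH a' b) => //; first exact: leq_trans closer le_dist.
    exact: P_step aa'.
  by rewrite le_kb andbT (leq_trans (f_step aa')) // ltn_neqAle ka.
- apply: (IH a b') => //; first exact: leq_trans closer le_dist.
    exact: P_step bb'.
  by rewrite le_ak -ltnS (leq_trans _ (f_step (step_sym bb'))) // ltn_neqAle eq_sym kb.
Qed.

End DiscreteIntermediateValue.

Lemma uniq4_neq (T : eqType) (x y z w : T) : uniq [:: x; y; z; w] ->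
  [/\ x != y, x != z & x != w] /\ [/\ y != z, y != w & z != w].
Proof. by rewrite /= !inE !negb_or => /and4P[/and3P[? ? ?] /andP[? ?] ? _]. Qed.

Lemma uniq4_swap (T : eqType) (x y z w : T) :
  uniq [:: x; z; y; w] = uniq [:: x; y; z; w].
Proof. by apply: perm_uniq; rewrite perm_cons (perm_catCA [:: z] [:: y] [:: w]). Qed.

Lemma eq_set2 (T : finType) (u v p q : T) : u != v -> [set u; v] = [set p; q] ->
  (u = p /\ v = q) \/ (u = q /\ v = p).
Proof.
move=> + e; move: (set21 u v) (set22 u v); rewrite e => /set2P[]-> /set2P[]->.
all: by [rewrite eqxx | left | right].
Qed.

Lemma exists_ltn_of_sum_eq (I : finType) (P : pred I) (F G : I -> nat) j :
  \sum_(i | P i) F i = \sum_(i | P i) G i -> P j -> G j < F j ->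
  exists2 i, P i & F i < G i.
Proof.
move=> eq_sum Pj ltGF; apply/exists_inP; apply: contraT => /exists_inPn geFG.
suff : \sum_(i | P i) G i < \sum_(i | P i) F i by rewrite eq_sum ltnn.
rewrite (bigD1 j) // [X in _ < X](bigD1 j) //= -addSn leq_add //.
by apply: leq_sum => i /andP[Pi _]; rewrite leqNgt geFG.
Qed.

Section TwoSwitch.
Variable n : nat.
Implicit Types (E O : {set {set 'I_n}}) (v x y z w : 'I_n).

Definition switch_edges x y z w : {set {set 'I_n}} :=
  [set [set x; y]; [set z; w]; [set x; z]; [set y; w]].

Definition switchable E x y z w : Prop :=
  [/\ uniq [:: x; y; z; w], [set x; y] \in E, [set z; w] \in E,
      [set x; z] \notin E & [set y; w] \notin E].

(* Toggling the four pairs removes the edges xy, zw and adds xz, yw. *)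
Definition two_switch E E' : Prop :=
  exists x y z w, switchable E x y z w /\ E' = symdiff E (switch_edges x y z w).

Lemma switch_edgesC x y z w : switch_edges x z y w = switch_edges x y z w.
Proof.
apply/setP => S; rewrite !inE.
by case: (S == [set x; z]); case: (S == [set y; w]); rewrite ?orbT ?orbF.
Qed.

Lemma switch_edgesU x y z w :
  switch_edges x y z w = [set [set x; y]; [set z; w]] :|: [set [set x; z]; [set y; w]].
Proof. by rewrite setUA. Qed.

Lemma switchable_symdiff E x y z w : switchable E x y z w ->
  switchable (symdiff E (switch_edges x y z w)) x z y w.
Proof.
case=> U xy zw xz yw; split; first by rewrite uniq4_swap.
all: by rewrite in_symdiff ?xy ?zw ?(negbTE xz) ?(negbTE yw) !inE eqxx ?orbT.
Qed.

Lemma two_switch_sym E E' : two_switch E E' -> two_switch E' E.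
Proof.
move=> [x [y [z [w [sw ->]]]]]; exists x, z, y, w.
rewrite [switch_edges x z y w]switch_edgesC symdiffK.
by split=> //; exact: switchable_symdiff.
Qed.

Lemma switchable_subset_disjoint E x y z w : switchable E x y z w ->
  [set [set x; y]; [set z; w]] \subset E /\
  [disjoint [set [set x; z]; [set y; w]] & E].
Proof.
case=> _ xy zw xz yw; split; first by apply/subsetP => S /set2P[]->.
by rewrite disjoints_subset; apply/subsetP => S /set2P[]->; rewrite inE.
Qed.

Lemma deg_sum E v : deg E v = \sum_(S in E) (v \in S : nat).
Proof.
rewrite /deg -sum1_card big_mkcond [RHS]big_mkcond; apply: eq_bigr => S _.
by rewrite !inE; case: (S \in E); case: (v \in S).
Qed.

Lemma deg_matching x y z w v : uniq [:: x; y; z; w] ->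
  deg [set [set x; y]; [set z; w]] v = (v == x) + (v == y) + (v == z) + (v == w).
Proof.
case/uniq4_neq=> [[xy xz xw] [_ _ zw]].
have in_pair a b : a != b -> (v \in [set a; b] : nat) = (v == a) + (v == b).
  move=> ab; rewrite !inE; have [->|_] := eqVneq v a; first by rewrite (negbTE ab).
  by case: (v == b).
have xy_zw : [set x; y] != [set z; w].
  by apply: contraNneq xz => e; have := set21 x y; rewrite e !inE (negbTE xw) orbF.
rewrite deg_sum big_setU1 /=; last by rewrite inE.
by rewrite big_set1 !in_pair // addnA.
Qed.

Lemma deg_matchingC x y z w v : uniq [:: x; y; z; w] ->
  deg [set [set x; y]; [set z; w]] v = deg [set [set x; z]; [set y; w]] v.
Proof.
move=> U; have U' : uniq [:: x; z; y; w] by rewrite uniq4_swap.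
by rewrite [LHS](deg_matching v U) [RHS](deg_matching v U') [(v == x) + _ + _]addnAC.
Qed.

Lemma realizes_two_switch d E E' : realizes d E -> two_switch E E' -> realizes d E'.
Proof.
case/andP=> simE /forallP degE [x [y [z [w [sw ->]]]]].
have [sub disj] := switchable_subset_disjoint sw.
case: sw => U _ _ _ _; have [[_ xz _] [_ yw _]] := uniq4_neq U.
rewrite switch_edgesU; apply/andP; split.
  apply/forall_inP => S; rewrite symdiff_setU // !inE.
  case/orP=> [/andP[_ /(forall_inP simE)] //|/orP[]/eqP->].
    by rewrite cards2 xz.
  by rewrite cards2 yw.
apply/forallP => v; rewrite -(eqP (degE v)); apply/eqP.
have := big_symdiff_setU (fun S : {set 'I_n} => (v \in S : nat)) sub disj.
rewrite -!deg_sum => balance; apply: (@addIn (deg [set [set x; y]; [set z; w]] v)).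
by rewrite balance; congr (_ + _); exact/esym/deg_matchingC.
Qed.

Lemma switch_symdiff_lt E O x y z w : switchable E x y z w ->
  [set x; y] \notin O -> [set x; z] \in O ->
  ([set z; w] \notin O) || ([set y; w] \in O) ->
  #|symdiff (symdiff E (switch_edges x y z w)) O| < #|symdiff E O|.
Proof.
case=> _ xyE zwE /negbTE xzE /negbTE ywE /negbTE xyO xzO zw_yw.
apply: card_symdiff_symdiff_lt.
have xy_xz : [set x; y] != [set x; z] by apply: contraTneq xyE => ->; rewrite xzE.
have two_in : [set [set x; y]; [set x; z]] \subset switch_edges x y z w :&: symdiff E O.
  apply/subsetP => S /set2P[]->;
    by rewrite inE in_symdiff ?xyE ?xyO ?xzE ?xzO !inE eqxx ?orbT.
have [t /subset_leq_card] : exists t, switch_edges x y z w :\: symdiff E O \subset [set t].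
  exists (if [set z; w] \in O then [set z; w] else [set y; w]).
  apply/subsetP => S; rewrite in_setD in_symdiff switch_edgesU; case/andP=> SD.
  case/setUP=> /set2P[] SE; move: SD zw_yw; rewrite SE ?xyE ?xyO ?zwE ?xzE ?xzO ?ywE;
    by case: ([set z; w] \in O); case: ([set y; w] \in O) => //= _ _; rewrite inE.
rewrite cards1 => out_le1; apply: leq_trans (subset_leq_card two_in).
by rewrite cards2 xy_xz ltnS.
Qed.

End TwoSwitch.

Section Adjacency.
Variable n : nat.
Implicit Types (E : {set {set 'I_n}}) (u v : 'I_n).

Definition adj E u v : bool := [set u; v] \in E.

Lemma adjC E u v : adj E u v = adj E v u.
Proof. by rewrite /adj setUC. Qed.

Lemma adj_irr E v : simple_graph E -> adj E v v = false.
Proof. by move=> /forall_inP simE; apply/negP => /simE; rewrite setUid cards1. Qed.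

Lemma deg_adj E v : simple_graph E -> deg E v = \sum_u adj E v u.
Proof.
move=> simE; rewrite /deg.
have -> : [set e in E | v \in e] = (fun u => [set v; u]) @: [set u | adj E v u].
  apply/setP => e; rewrite !inE; apply/andP/imsetP => [[eE ve]|[u]].
    have /cards2P[a [b [_ def_e]]] := forall_inP simE e eE.
    move: ve; rewrite def_e !inE; case/orP => /eqP ->.
      by exists b; rewrite // inE /adj -def_e.
    by exists a; rewrite ?inE /adj setUC -?def_e.
  by rewrite inE /adj => uE ->; rewrite uE set21.
rewrite card_in_imset; last first.
  move=> u1 u2; rewrite !inE => adj1 _ /setP/(_ u1); rewrite !inE eqxx orbT.
  by case/esym/orP=> /eqP // u1v; rewrite u1v adj_irr in adj1.
by rewrite -sum1_card big_mkcond /=; apply: eq_bigr => u _; rewrite inE; case: adj.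
Qed.

End Adjacency.

Section SwitchTowards.
Variables (n : nat) (d : 'I_n -> nat) (E H : {set {set 'I_n}}).
Hypotheses (rE : realizes d E) (rH : realizes d H).
Implicit Types (v x y z w : 'I_n).

Let simE : simple_graph E. Proof. by case/andP: rE. Qed.
Let simH : simple_graph H. Proof. by case/andP: rH. Qed.

Lemma sum_adj_eq v : \sum_u adj E v u = \sum_u adj H v u.
Proof.
case/andP: rE => _ /forallP/(_ v)/eqP degE; case/andP: rH => _ /forallP/(_ v)/eqP degH.
by rewrite -!deg_adj // degE degH.
Qed.

Lemma exists_alternating_adj x y : adj E x y -> ~~ adj H x y ->
  exists2 z, adj H x z & ~~ adj E x z.
Proof.
move=> Exy Hxy; have [|z _ ltz] := exists_ltn_of_sum_eq (j := y) (sum_adj_eq x) isT.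
  by rewrite Exy (negbTE Hxy).
by exists z; move: ltz; case: (adj H x z); case: (adj E x z).
Qed.

(* Summed over all w, both sides of the inequality give deg z + deg y, and
   degrees agree in E and H.  At w = x the left side is 2 and the right side 0,
   the terms at w = y and w = z balance, so some other w has a smaller left side. *)
Lemma exists_switch_vertex x y z :
  adj E x y -> ~~ adj H x y -> adj H x z -> ~~ adj E x z ->
  exists2 w, uniq [:: x; y; z; w] & adj H z w + adj E y w < adj E z w + adj H y w.
Proof.
move=> Exy Hxy Hxz Exz.
have xy : x != y by apply: contraTneq Exy => <-; rewrite adj_irr.
have xz : x != z by apply: contraTneq Hxz => <-; rewrite adj_irr.
have yz : y != z by apply: contraTneq Exy => ->.
pose F w := adj H z w + adj E y w; pose G w := adj E z w + adj H y w.
have sumFG : \sum_(w | (w != y) && (w != z)) F w = \sum_(w | (w != y) && (w != z)) G w.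
  have split_yz (K : 'I_n -> nat) :
      \sum_w K w = K y + K z + \sum_(w | (w != y) && (w != z)) K w.
    by rewrite [in LHS](bigD1 y) // [in LHS](bigD1 z) 1?eq_sym //= addnA.
  have : \sum_w F w = \sum_w G w.
    by rewrite !big_split /=; congr (_ + _); [exact/esym/sum_adj_eq | exact: sum_adj_eq].
  rewrite !split_yz /F /G !adj_irr // (adjC H z y) (adjC E z y) !addn0 !add0n.
  by rewrite [adj E y z + _]addnC => /addnI.
have GFx : G x < F x.
  by rewrite /F /G (adjC E z) (adjC H y) (adjC H z) (adjC E y) Exy Hxz (negbTE Hxy) (negbTE Exz).
have [|w /andP[wy wz] ltw] := exists_ltn_of_sum_eq sumFG _ GFx; first by rewrite xy xz.
have wx : w != x by apply: contraTneq ltw => ->; rewrite -leqNgt ltnW.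
exists w => //; rewrite /= !inE !negb_or xy xz yz.
by rewrite (eq_sym x w) wx (eq_sym y w) wy (eq_sym z w) wz.
Qed.

Lemma exists_closer_two_switch x y : [set x; y] \in E -> [set x; y] \notin H ->
  (exists2 E', two_switch E E' & #|symdiff E' H| < #|symdiff E H|) \/
  (exists2 H', two_switch H H' & #|symdiff H' E| < #|symdiff H E|).
Proof.
move=> Exy Hxy; have [z Hxz Exz] := exists_alternating_adj Exy Hxy.
have [w U ltw] := exists_switch_vertex Exy Hxy Hxz Exz.
have [/andP[Ezw Eyw]|E_zw_yw] := boolP (adj E z w && ~~ adj E y w).
  have sw : switchable E x y z w by split.
  left; exists (symdiff E (switch_edges x y z w)); first by exists x, y, z, w.
  apply: switch_symdiff_lt sw Hxy Hxz _; change (~~ adj H z w || adj H y w).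
  move: ltw Ezw Eyw.
  by case: (adj H z w); case: (adj H y w); case: (adj E z w); case: (adj E y w).
have [Hyw Hzw Eyw_zw] : [/\ adj H y w, ~~ adj H z w & ~~ adj E y w || adj E z w].
  move: ltw E_zw_yw.
  by case: (adj H y w); case: (adj H z w); case: (adj E y w); case: (adj E z w).
have sw : switchable H x z y w.
  by split; [rewrite uniq4_swap | exact: Hxz | exact: Hyw | exact: Hxy | exact: Hzw].
right; exists (symdiff H (switch_edges x z y w)); first by exists x, z, y, w.
exact: switch_symdiff_lt sw Exz Exy Eyw_zw.
Qed.

End SwitchTowards.

Lemma exists_closer_realization n (d : 'I_n -> nat) (E H : {set {set 'I_n}}) :
  realizes d E -> realizes d H -> E != H ->
  (exists2 E', two_switch E E' & #|symdiff E' H| < #|symdiff E H|) \/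
  (exists2 H', two_switch H H' & #|symdiff E H'| < #|symdiff E H|).
Proof.
move=> rE rH neq_EH; have [S] : exists S, S \in symdiff E H.
  apply/set0Pn; apply: contraNneq neq_EH => /setP EH; apply/eqP/setP => S.
  by move: (EH S); rewrite in_symdiff inE; case: (S \in E); case: (S \in H).
rewrite in_symdiff; case SE: (S \in E); case: (boolP (S \in H)) => // SH _.
  have /cards2P[x [y [_ defS]]] := forall_inP (andP rE).1 S SE.
  rewrite defS in SE SH.
  have [[E' ? ?]|[H' ? lt]] := exists_closer_two_switch rE rH SE SH; first by left; exists E'.
  by right; exists H'; rewrite // (symdiffC E H') (symdiffC E H).
have /cards2P[x [y [_ defS]]] := forall_inP (andP rH).1 S SH.
move/negbT: SE; rewrite defS in SH * => SE.
have [[H' ? lt]|[E' ? lt]] := exists_closer_two_switch rH rE SH SE.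
  by right; exists H'; rewrite // (symdiffC E H') (symdiffC E H).
by left; exists E'; rewrite // (symdiffC E' H) (symdiffC E H).
Qed.

Section FractionalCover.
Variables (R : realType) (n : nat).
Local Open Scope ring_scope.
Implicit Types (F : {set {set 'I_n}}) (f : 'I_n -> R).

Lemma frac_cover_subset F F' f : F' \subset F -> frac_cover F f -> frac_cover F' f.
Proof. by move=> /subsetP sF'F [f_ge0 f_cov]; split=> // u v uv /sF'F; exact: f_cov. Qed.

Lemma frac_cover_setU1 F f p q : frac_cover F f -> 1 <= f p + f q ->
  frac_cover ([set p; q] |: F) f.
Proof.
move=> [f_ge0 f_cov] pq; split=> // u v uv /setU1P[/(eq_set2 uv)|/(f_cov _ _ uv)] //.
by case=> [][-> ->] //; rewrite addrC.
Qed.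

Lemma frac_cover1 F : frac_cover F (fun=> 1 : R).
Proof. by split=> // u v _ _; rewrite lerDl. Qed.

Lemma tau_star_le F f : frac_cover F f -> tau_star R F <= \sum_(i < n) f i.
Proof.
move=> cov_f; apply: ge_inf; last by exists f.
by exists 0 => _ [g [[g_ge0 _] ->]]; exact: sumr_ge0.
Qed.

Lemma exists_frac_cover_lt F t : tau_star R F < t ->
  exists2 f, frac_cover F f & \sum_(i < n) f i < t.
Proof.
case/inf_lt => [|_ [f [cov_f ->]] lt_t]; last by exists f.
by exists (\sum_(i < n) 1); exists (fun=> 1); split=> //; exact: frac_cover1.
Qed.

End FractionalCover.

Section Mu.
Variables (R : realType) (n : nat).
Local Open Scope ring_scope.
Implicit Types (E A C : {set {set 'I_n}}) (f : 'I_n -> R) (t : {set 'I_n}).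

Lemma mu_le_cover E (E1 : {set {set 'I_n}}) f : E1 \subset E ->
  frac_cover (E :\: E1) f -> \sum_(i < n) f i < n%:R / 2 -> (mu R E <= #|E1|)%N.
Proof.
move=> sE1E cov_f lt_f; rewrite /mu -minEnat -leEnat; apply: bigmin_le_cond.
by rewrite sE1E (le_lt_trans (tau_star_le cov_f)).
Qed.

(* For n > 0 the set E itself is admissible, so the minimum defining mu is
   attained and not just its default value #|E|. *)
Lemma mu_witness E : (0 < n)%N ->
  exists2 E0 : {set {set 'I_n}}, E0 \subset E &
    exists2 f : 'I_n -> R, frac_cover (E :\: E0) f &
      \sum_(i < n) f i < n%:R / 2 /\ mu R E = #|E0|.
Proof.
move=> n_gt0; rewrite /mu -minEnat.
pose P E1 := (E1 \subset E) && (tau_star R (E :\: E1) < n%:R / 2).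
have [||E0 /andP[sE0E lt_tau] ->] := eq_bigmin (x := #|E|) E P (fun E1 => #|E1|).
- rewrite /P subxx setDv (le_lt_trans (tau_star_le (f := fun=> 0) _)) ?big1 ?divr_gt0 ?ltr0n //.
  by split=> // u v _; rewrite inE.
- by move=> E1 /andP[/subset_leq_card].
have [f cov_f lt_f] := exists_frac_cover_lt lt_tau.
by exists E0 => //; exists f.
Qed.

Lemma mu_le_replace E (E0 : {set {set 'I_n}}) A C f : E0 \subset E ->
  frac_cover (E :\: E0) f -> \sum_(i < n) f i < n%:R / 2 ->
  (mu R ((E :\: A) :|: C) <= #|(E0 :\: A) :|: C|)%N.
Proof.
move=> sE0E cov_f lt_f; apply: mu_le_cover lt_f; first exact/setUSS/subxx/setSD.
apply: frac_cover_subset cov_f; apply/subsetP => S; rewrite !inE.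
by case: (S \in E0); case: (S \in E); case: (S \in A); case: (S \in C).
Qed.

Lemma mu_le_setU1 E (E0 : {set {set 'I_n}}) A C p q t f : E0 \subset E ->
  [disjoint E0 & A] -> C = [set [set p; q]; t] ->
  frac_cover (E :\: E0) f -> \sum_(i < n) f i < n%:R / 2 -> 1 <= f p + f q ->
  (mu R ((E :\: A) :|: C) <= #|E0|.+1)%N.
Proof.
move=> sE0E dE0A -> cov_f lt_f pq; rewrite -add1n -(cards1 t).
apply: leq_trans (leq_card_setU _ _); apply: mu_le_cover lt_f.
  rewrite subUset sub1set in_setU set22 orbT /=; apply/subsetP => S SE0.
  by rewrite !inE (subsetP sE0E _ SE0) (disjointFr dE0A SE0).
apply: frac_cover_subset (frac_cover_setU1 cov_f pq); apply/subsetP => S; rewrite !inE.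
by case: (S == t); case: (S == [set p; q]); case: (S \in E0); case: (S \in E); case: (S \in A).
Qed.

(* Let E0 be an optimal set of deleted edges for E.  If E0 contains xy or zw,
   trade these for xz and yw.  Otherwise a cover f of E - E0 covers xy and zw,
   so f x + f y + f z + f w >= 2 and f covers xz or yw: deleting the other one
   suffices. *)
Lemma mu_two_switch E E' : two_switch E E' -> (mu R E' <= (mu R E).+1)%N.
Proof.
move=> [x [y [z [w [sw ->]]]]].
have [sAE dCE] := switchable_subset_disjoint sw.
rewrite switch_edgesU symdiff_setU //.
have [E0 sE0E [f cov_f [lt_f ->]]] := mu_witness E (leq_ltn_trans (leq0n _) (ltn_ord x)).
case: (sw) => U xyE zwE _ _; have [[xy _ _] [_ _ zw]] := uniq4_neq U.
have [dE0A|meet] := boolP [disjoint E0 & [set [set x; y]; [set z; w]]].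
  have [_ cov_edge] := cov_f.
  have := cov_edge x y xy; rewrite in_setD xyE (disjointFl dE0A (set21 _ _)) => /(_ isT) cov_xy.
  have := cov_edge z w zw; rewrite in_setD zwE (disjointFl dE0A (set22 _ _)) => /(_ isT) cov_zw.
  have [cov_xz|lt_xz] := lerP 1 (f x + f z).
    exact: mu_le_setU1 sE0E dE0A erefl cov_f lt_f cov_xz.
  by apply: mu_le_setU1 sE0E dE0A (setUC _ _) cov_f lt_f _; lra.
apply: leq_trans (mu_le_replace _ _ sE0E cov_f lt_f) _.
rewrite -setI_eq0 -card_gt0 in meet; apply: leq_trans (leq_card_setU _ _) _.
rewrite cards2 -(cardsID [set [set x; y]; [set z; w]] E0) addnC -addSn leq_add2r ltnS.
exact: leq_trans (leq_b1 _) meet.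
Qed.

End Mu.

Section Extremes.
Variables (R : realType) (n : nat) (d : 'I_n -> nat).

Lemma mu_up_attained E0 : realizes d E0 ->
  exists2 E, realizes d E & mu_up R d = mu R E.
Proof.
move=> rE0; rewrite /mu_up -maxEnat.
by have [E rE ->] := eq_bigmax E0 (realizes d) (@mu R n) rE0 (fun _ _ => leq0n _); exists E.
Qed.

Lemma mu_low_attained E0 : realizes d E0 ->
  exists2 E, realizes d E & mu_low R d = mu R E.
Proof.
move=> rE0; rewrite /mu_low -minEnat.
have [E rE ->] := eq_bigmin (x := mu_up R d) E0 (realizes d) (@mu R n) rE0
  (fun E rE => leq_bigmax_cond _ rE).
by exists E.
Qed.

End Extremes.

Theorem theorem13 (R : realType) (n : nat) (d : 'I_n -> nat) (k : nat) :
  graphical d ->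
  (mu_low R d <= k <= mu_up R d)%N ->
  exists E : {set {set 'I_n}}, realizes d E /\ mu R E = k.
Proof.
move=> [E0 rE0].
have [Elo rElo ->] := mu_low_attained R rE0.
have [Eup rEup ->] := mu_up_attained R rE0 => between.
have [E rE muE] := @discrete_ivt _ (realizes d) (@two_switch n)
  (fun E H => #|symdiff E H|) (@mu R n) (@two_switch_sym n) (@realizes_two_switch n d)
  (@mu_two_switch R n) (@exists_closer_realization n d) Elo Eup k rElo rEup between.
by exists E.
Qed.
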